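(* In the single expert committee under liquid democracy, there is a neutral strategy profile that maximizes the probability that the outcome matches the state among all neutral strategy profiles and under which (1) the expert votes sincerely, and (2) $1\le v_e\le\min\{\lfloor w^*\rfloor,\ (N+1)/2\}$, where $v_e$ is the number of votes the expert holds and $w^*=\log\big(\tfrac{r}{1-r}\big)/\log\big(\tfrac{q}{1-q}\big)$.
   Context: Single expert committee: $N$ voters with $N$ odd, all independent (payoff 1 if the outcome matches the state, $A$ with $a$ and $B$ with $b$, else 0); $N-1$ nonexperts of precision $q\in(1/2,1)$ and one expert $e$ of precision $r\in(q,1)$; prior $\Pr(\omega=a)=1/2$ for state $\omega\in\{a,b\}$; voter $i$ observes private signal $s_i$ with $\Pr(s_i=\omega\mid\omega)=q_i$, conditionally independent; precisions are common knowledge. Outcome: simple majority of votes cast, ties broken uniformly at random. Liquid democracy: each voter maps her signal to vote $A$, vote $B$, abstain, or delegate to another voter; delegation is transitive, votes in a delegation cycle are abstained, and a non-delegator casts all votes she holds (own plus delegated) for the same alternative or abstains them all. A strategy profile is neutral if each voter votes sincerely ($a$ at signal $a$, $b$ at signal $b$), abstains at both signals, or delegates to the same voter at both signals. The number of votes a voter holds is her own vote (if she does not delegate) plus all votes delegated to her directly or transitively. *)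

From HB Require Import structures.
From mathcomp Require Import all_boot all_order all_algebra.
From mathcomp Require Import reals exp.
Set Implicit Arguments. Unset Strict Implicit. Unset Printing Implicit Defensive.
Import Order.TTheory GRing.Theory Num.Theory.
Local Open Scope ring_scope.

(* States / signals / alternatives encoded as bool: true = a (resp. A), false = b (resp. B). *)

(* A neutral strategy of a voter: vote sincerely (A at signal a, B at signal b),
   abstain at both signals, or delegate to the same voter at both signals. *)
Inductive naction (N : nat) : Type :=
| Sincere
| Abstain
| Delegate of 'I_N.
Arguments Sincere {N}.
Arguments Abstain {N}.

Definition nprofile (N : nat) := 'I_N -> naction N.

Definition valid_profile N (p : nprofile N) : Prop :=
  forall i : 'I_N, p i <> Delegate i.

Definition dnext N (p : nprofile N) (i : 'I_N) : 'I_N :=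
  match p i with Delegate j => j | _ => i end.

Definition is_sincere N (p : nprofile N) (i : 'I_N) : bool :=
  if p i is Sincere then true else false.

Definition is_delegator N (p : nprofile N) (i : 'I_N) : bool :=
  if p i is Delegate _ then true else false.

(* Final holder of voter j's vote under transitive delegation, or None if the
   delegation chain of j ends in a cycle (in which case the vote is abstained).
   After N steps a chain without cycle has reached its non-delegating end. *)
Definition terminal N (p : nprofile N) (j : 'I_N) : option 'I_N :=
  let t := iter N (dnext p) j in
  if is_delegator p t then None else Some t.

Definition votes_held N (p : nprofile N) (i : 'I_N) : nat :=
  #|[set j : 'I_N | terminal p j == Some i]|.

Definition tally N (p : nprofile N) (s : {ffun 'I_N -> bool}) (x : bool) : nat :=
  \sum_(j : 'I_N)
     (if terminal p j is Some t then is_sincere p t && (s t == x) else false : nat).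

Section Prob.
Variable R : realType.

Definition precision N (e : 'I_N) (q r : R) (i : 'I_N) : R :=
  if i == e then r else q.

Definition sig_prob N (e : 'I_N) (q r : R) (w : bool) (s : {ffun 'I_N -> bool}) : R :=
  \prod_(i : 'I_N)
     (if s i == w then precision e q r i else 1 - precision e q r i).

(* Probability that the simple-majority outcome (ties broken uniformly at random)
   equals the state w, given the vote counts. *)
Definition correct_prob (w : bool) (nA nB : nat) : R :=
  let (nw, nl) := if w then (nA, nB) else (nB, nA) in
  if (nl < nw)%N then 1 else if nw == nl then 2^-1 else 0.

(* Probability that the outcome matches the state under neutral profile p,
   with uniform prior on the state. *)
Definition success_prob N (e : 'I_N) (q r : R) (p : nprofile N) : R :=
  \sum_(w : bool) 2^-1 *
    \sum_(s : {ffun 'I_N -> bool})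
       sig_prob e q r w s * correct_prob w (tally p s true) (tally p s false).

Definition wstar (q r : R) : R := ln (r / (1 - r)) / ln (q / (1 - q)).
End Prob.

From Pilot Require Import Defs.
From HB Require Import structures.
From mathcomp Require Import all_boot all_order all_algebra.
From mathcomp Require Import reals exp.
From mathcomp Require Import zify ring lra.
Set Implicit Arguments. Unset Strict Implicit. Unset Printing Implicit Defensive.
Import Order.TTheory GRing.Theory Num.Theory.
Local Open Scope ring_scope.

(* The success probability of a neutral profile depends only on how many votes each
   sincere voter casts, so we compare weighted majority rules.  Pairing every signal
   profile with the one flipping the signals of a set U of voters shows that a rule
   supported on U beats another as soon as, on each pair, it sides at least as often with
   the likelihood-ratio test on U; on U = {e} u K that test gives the expert weight
   w* = logit r / logit q and every other voter weight 1.  Hence (i) any rule can be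
   replaced by one giving the expert floor w* or floor w* + 1 votes, whichever makes
   the committee odd (no ties, so it is the test itself), clamped to the votes the old
   rule had, and one vote to each voter of K; (ii) all N votes can be used, by adding
   fresh single voters or, when one vote is left over, because an even committee is the
   average of its two odd neighbours; (iii) while the expert holds more than w* votes or
   a majority, handing one of her votes to a fresh voter does not hurt.  An optimal
   profile is thus found among the finitely many in which the expert holds between 1 and
   min (floor w*, (N+1)/2) votes and every other voter votes or delegates to her. *)

Definition signb (b : bool) : int := if b then 1 else -1.

Lemma signbN b : signb (~~ b) = - signb b.
Proof. by case: b. Qed.

Lemma signb_pm1 b : signb b = 1 \/ signb b = -1.
Proof. by case: b; [left|right]. Qed.

Definition win_prob {R : realFieldType} (z : int) : R :=
  if 0 < z then 1 else if z == 0 then 2^-1 else 0.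

Section WinProb.
Variable R : realFieldType.
Local Notation win := (@win_prob R).

Lemma win_prob_pos (z : int) : 0 < z -> win z = 1.
Proof. by rewrite /win_prob => ->. Qed.

Lemma win_prob_neg (z : int) : z < 0 -> win z = 0.
Proof. by move=> z_lt0; rewrite /win_prob ltNge (ltW z_lt0) lt_eqF. Qed.

Lemma win_prob0 : win 0 = 2^-1.
Proof. by rewrite /win_prob ltxx eqxx. Qed.

Lemma win_probN (z : int) : win (- z) = 1 - win z.
Proof.
case: (ltgtP z 0) => [z_lt0|z_gt0|->].
- by rewrite win_prob_pos ?oppr_gt0 // win_prob_neg // subr0.
- by rewrite win_prob_neg ?oppr_lt0 // win_prob_pos // subrr.
- by rewrite oppr0 win_prob0; field.
Qed.

Lemma win_prob_le_of (z1 z2 : int) : z1 <= z2 \/ z1 < 0 \/ 0 < z2 -> win z1 <= win z2.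
Proof.
have win_ge0 z : 0 <= win z.
  by rewrite /win_prob; case: ifP => // _; case: ifP => // _; rewrite invr_ge0.
have win_le1 z : win z <= 1.
  by rewrite /win_prob; case: ifP => // _; case: ifP => // _; rewrite invf_le1 ?ler1n.
case=> [z12|[/win_prob_neg->|/win_prob_pos->]]; [|exact: win_ge0|exact: win_le1].
case: (ltgtP z2 0) => [z2_lt0|/win_prob_pos->|z2_0] //.
  by rewrite !win_prob_neg // (le_lt_trans z12).
case: (ltgtP z1 0) => [/win_prob_neg->|z1_gt0|->]; rewrite ?z2_0 //.
by move: z12; rewrite z2_0 leNgt z1_gt0.
Qed.

Lemma win_prob_even (b : int) : win (b *+ 2) *+ 2 = win (b *+ 2 - 1) + win (b *+ 2 + 1).
Proof.
case: (ltgtP b 0) => [b_lt0|b_gt0|->].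
- by rewrite !win_prob_neg //; lia.
- by rewrite !win_prob_pos ?mulr2n //; lia.
- rewrite mul0rn win_prob0 (@win_prob_neg (0 - 1)) // (@win_prob_pos (0 + 1)) //.
  by rewrite -mulr_natr; field.
Qed.

End WinProb.

Lemma ln_prod (R : realType) (I : finType) (P : pred I) (F : I -> R) :
  (forall i, P i -> 0 < F i) -> ln (\prod_(i | P i) F i) = \sum_(i | P i) ln (F i).
Proof.
move=> F_gt0.
suff [] : 0 < \prod_(i | P i) F i /\ ln (\prod_(i | P i) F i) = \sum_(i | P i) ln (F i)
  by [].
apply: (big_ind2 (fun a b => 0 < a /\ ln a = b)); first by rewrite ln1.
  by move=> a b c d [a_gt0 <-] [c_gt0 <-]; rewrite mulr_gt0 ?lnM ?posrE.
by move=> i /F_gt0.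
Qed.

Section WeightedMajority.
Variables (R : realType) (I : finType) (pi : I -> R).
Local Notation win := (@win_prob R).

Definition sig_lik (i : I) (b : bool) : R := if b then pi i else 1 - pi i.

Definition lik (U : {set I}) (x : {ffun I -> bool}) : R := \prod_(i in U) sig_lik i (x i).

Definition margin (w : I -> nat) (x : {ffun I -> bool}) : int :=
  \sum_i (w i)%:Z * signb (x i).

(* Signal profiles are recorded relative to the state: [x i] says whether the signal of
   voter [i] is correct. *)
Definition wmaj_success (w : I -> nat) : R :=
  \sum_(x : {ffun I -> bool}) (\prod_i sig_lik i (x i)) * win (margin w x).

Definition flip (U : {set I}) (x : {ffun I -> bool}) : {ffun I -> bool} :=
  [ffun i => if i \in U then ~~ x i else x i].

Definition supported (w : I -> nat) (U : {set I}) := forall i, i \notin U -> w i = 0%N.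

Lemma supportedS w (U V : {set I}) : U \subset V -> supported w U -> supported w V.
Proof. by move=> /subsetP UV wU i iV; apply: wU; apply: contra iV; exact: UV. Qed.

Lemma eq_wmaj_success w w' : w =1 w' -> wmaj_success w = wmaj_success w'.
Proof.
by move=> ww'; apply: eq_bigr => x _; congr (_ * win _); apply: eq_bigr => i _; rewrite ww'.
Qed.

Lemma flipK U : involutive (flip U).
Proof. by move=> x; apply/ffunP => i; rewrite !ffunE; case: (i \in U) => //; rewrite negbK. Qed.

Lemma margin_flip w U x : supported w U -> margin w (flip U x) = - margin w x.
Proof.
move=> wU; rewrite /margin -sumrN; apply: eq_bigr => i _; rewrite ffunE.
by case: ifP => [_|/negbT/wU->]; rewrite ?signbN ?mulrN ?mul0r ?oppr0.
Qed.

Hypotheses (pi_gt0 : forall i, 0 < pi i) (pi_lt1 : forall i, pi i < 1).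

Lemma sig_lik_gt0 i b : 0 < sig_lik i b.
Proof. by have := pi_gt0 i; have := pi_lt1 i; rewrite /sig_lik; case: b; lra. Qed.

Lemma lik_gt0 U x : 0 < lik U x.
Proof. by apply: prodr_gt0 => i _; exact: sig_lik_gt0. Qed.

Lemma wmaj_success_le_pairing U w w' : supported w U -> supported w' U ->
  (forall x, lik U (flip U x) < lik U x -> win (margin w x) <= win (margin w' x)) ->
  wmaj_success w <= wmaj_success w'.
Proof.
move=> wU w'U dom.
pose g x : R := win (margin w' x) - win (margin w x).
pose out (x : {ffun I -> bool}) : R := \prod_(i | i \notin U) sig_lik i (x i).
have gN x : g (flip U x) = - g x by rewrite /g !margin_flip // !win_probN; ring.
have out_flip x : out (flip U x) = out x.
  by apply: eq_bigr => i /negbTE iU; rewrite ffunE iU.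
pose P (x : {ffun I -> bool}) := \prod_i sig_lik i (x i).
have P_split x : P x = lik U x * out x by rewrite /P (bigID (mem U)).
have diffE : wmaj_success w' - wmaj_success w = \sum_x P x * g x.
  by rewrite -sumrB; apply: eq_bigr => x _; rewrite mulrBr.
(* Pairing x with its flip on U turns twice the gain into a sum of products of factors
   of the same sign. *)
have flipE : \sum_x P x * g x = - \sum_x P (flip U x) * g x.
  rewrite (reindex_inj (inv_inj (flipK U))) -sumrN.
  by apply: eq_bigr => x _; rewrite gN mulrN.
have pairE : (wmaj_success w' - wmaj_success w) *+ 2 = \sum_x (P x - P (flip U x)) * g x.
  rewrite mulr2n diffE {2}flipE -sumrB.
  by apply: eq_bigr => x _; rewrite mulrBl.
rewrite -subr_ge0 -(pmulrn_lge0 _ (isT : (0 < 2)%N)) pairE.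
apply: sumr_ge0 => x _; rewrite !P_split out_flip -mulrBl mulrAC.
apply: mulr_ge0; last by apply: prodr_ge0 => i _; exact/ltW/sig_lik_gt0.
case: (ltgtP (lik U (flip U x)) (lik U x)) => [lt|gt|->]; last by rewrite subrr mul0r.
  by apply: mulr_ge0; [rewrite subr_ge0 ltW | rewrite /g /= subr_ge0 dom].
apply: mulr_le0; first by rewrite subr_le0 ltW.
by rewrite -oppr_ge0 -gN /g /= subr_ge0 dom // flipK.
Qed.

Definition logit (p : R) : R := ln (p / (1 - p)).

Lemma ln_lik_flip U x :
  ln (lik U x) - ln (lik U (flip U x)) = \sum_(i in U) (signb (x i))%:~R * logit (pi i).
Proof.
rewrite /lik !ln_prod; try by move=> *; exact: sig_lik_gt0.
rewrite -sumrB; apply: eq_bigr => i iU; rewrite ffunE iU /logit.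
have := pi_gt0 i; have := pi_lt1 i => pi_i_lt1 pi_i_gt0.
rewrite ln_div ?posrE ?subr_gt0 //.
by case: (x i); rewrite /sig_lik /= ?mul1r ?mulN1r ?opprB.
Qed.

End WeightedMajority.

Section ThresholdRule.
Variable R : realFieldType.
Local Notation win := (@win_prob R).

(* Integer cores of the comparisons made below: [c%:Z + c%:Z - k%:Z] is the balance of
   [k] voters of whom [c] are right, and [f] stands for floor w*. *)

Lemma clamped_threshold_beats (f ts a D k c : nat) (s : int) :
  (f <= ts <= f.+1)%N -> odd (ts + k) -> - D%:Z <= s <= D%:Z ->
  let n := c%:Z + c%:Z - k%:Z in let t := minn ts (maxn 1 (a + D)) in
  (0 <= f%:Z + n -> win (a%:Z + (n + s)) <= win (t%:Z + n)) /\
  (f%:Z + n < 0 -> win (t%:Z + n) <= win (a%:Z + (n + s))).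
Proof.
move=> ts_f ts_odd s_D n t; have := odd_double_half (ts + k).
rewrite ts_odd -muln2 => tsk; rewrite {}/n {}/t.
by split=> h; apply: win_prob_le_of; lia.
Qed.

Lemma shift_vote_beats (f c k M cK : nat) (sj : bool) :
  c.+1 + k = M.*2.+1 -> (f < c.+1)%N \/ (M.*2.+2 < c.+1.*2)%N -> (cK <= k)%N ->
  let n := cK%:Z + cK%:Z - k%:Z in
  (0 <= f%:Z + (signb sj + n) -> win (c.+1%:Z + n) <= win (c%:Z + (signb sj + n))) /\
  (f%:Z + (signb sj + n) < 0 -> win (c%:Z + (signb sj + n)) <= win (c.+1%:Z + n)).
Proof.
move=> ckM c_big cKk n; rewrite {}/n.
by case: sj; split=> h; apply: win_prob_le_of; rewrite /signb in h *; lia.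
Qed.

Lemma win_prob_avg_margin (t k c m : nat) (sg : int) : sg = 1 \/ sg = -1 ->
  (t.+1 + k = m * 2)%N -> let n := c%:Z + c%:Z - k%:Z in
  win (t.+1%:Z * sg + n) *+ 2 = win (t%:Z * sg + n) + win (t.+2%:Z * sg + n).
Proof.
move=> sg_pm1 tkm n; rewrite {}/n.
have avg (z b : int) : z = b *+ 2 -> win z *+ 2 = win (z - 1) + win (z + 1).
  by move=> ->; exact: win_prob_even.
case: sg_pm1 => ->.
- rewrite (avg _ (m%:Z + c%:Z - k%:Z)); last by rewrite mulr2n; lia.
  by congr (win _ + win _); lia.
- rewrite [RHS]addrC (avg _ (c%:Z - m%:Z)); last by rewrite mulr2n; lia.
  by congr (win _ + win _); lia.
Qed.

End ThresholdRule.

Section Delegation.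
Variable N : nat.
Implicit Types (p : nprofile N) (i j t : 'I_N) (K : {set 'I_N}).

Definition votes_cast p i : nat := if is_sincere p i then votes_held p i else 0.

Lemma votes_heldE p i : votes_held p i = (\sum_j (terminal p j == Some i))%N.
Proof.
by rewrite /votes_held -sum1_card big_mkcond; apply: eq_bigr => j _; rewrite inE; case: eqP.
Qed.

Lemma sum_terminal p j (F : 'I_N -> nat) :
  (\sum_t (terminal p j == Some t) * F t)%N = if terminal p j is Some t then F t else 0%N.
Proof.
case: (terminal p j) => [t0|]; last by rewrite big1.
rewrite (bigD1 t0) //= eqxx mul1n big1 ?addn0 // => t /negbTE t_t0.
by rewrite (inj_eq Some_inj) eq_sym t_t0.
Qed.

Lemma tally_votes_cast p s b : Defs.tally p s b = (\sum_t votes_cast p t * (s t == b))%N.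
Proof.
rewrite /Defs.tally (eq_bigr _ (fun j _ => esym (sum_terminal p j _))) exchange_big /=.
apply: eq_bigr => t _; rewrite -big_distrl /= -votes_heldE /votes_cast.
by case: (is_sincere p t); rewrite ?muln0.
Qed.

Lemma sum_votes_cast p : (\sum_i votes_cast p i <= N)%N.
Proof.
apply: (@leq_trans (\sum_i votes_held p i)).
  by apply: leq_sum => i _; rewrite /votes_cast; case: ifP.
rewrite (eq_bigr _ (fun i _ => votes_heldE p i)) exchange_big /=.
rewrite -[X in (_ <= X)%N]card_ord -sum1_card; apply: leq_sum => j _.
by rewrite (eq_bigr _ (fun t _ => esym (muln1 _))) sum_terminal; case: terminal.
Qed.

Variable e : 'I_N.

Definition expert_weight (t : nat) (K : {set 'I_N}) i : nat :=
  if i == e then t else i \in K.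

Definition expert_profile (K : {set 'I_N}) : nprofile N :=
  fun i => if (i == e) || (i \in K) then Sincere else Delegate e.

Lemma expert_profile_valid K : valid_profile (expert_profile K).
Proof. by move=> i; rewrite /expert_profile; case: ifP => // /norP[/eqP ie _] [/esym]. Qed.

Lemma terminal_expert_profile K j :
  terminal (expert_profile K) j = Some (if (j == e) || (j \in K) then j else e).
Proof.
have dnextE i : dnext (expert_profile K) i = if (i == e) || (i \in K) then i else e.
  by rewrite /dnext /expert_profile; case: ifP.
have delegE i : is_delegator (expert_profile K) i = ~~ ((i == e) || (i \in K)).
  by rewrite /is_delegator /expert_profile; case: ifP.
rewrite /terminal /=; case jKe: ((j == e) || (j \in K)).
  by rewrite iter_fix ?dnextE ?jKe // delegE jKe.
have N_gt0 : (0 < N)%N by case: (N) e => [[]|].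
rewrite -[X in iter X _ _](prednK N_gt0) iterSr dnextE jKe.
by rewrite iter_fix ?dnextE ?eqxx // delegE eqxx.
Qed.

Lemma votes_cast_expert_profile K : e \notin K ->
  votes_cast (expert_profile K) =1 expert_weight (N - #|K|) K.
Proof.
move=> eK i; rewrite /votes_cast /expert_weight /is_sincere /votes_held.
under eq_finset => j do rewrite terminal_expert_profile (inj_eq Some_inj).
case: (eqVneq i e) => [->|ie]; rewrite /expert_profile ?eqxx /=; last first.
  rewrite (negbTE ie) /=; case: (boolP (i \in K)) => iK //=.
  rewrite (_ : [set j | _] = [set i]) ?cards1 //.
  apply/setP => j; rewrite !inE; case: (eqVneq j i) => [->|ji]; first by rewrite iK orbT eqxx.
  by case: ifP => _; rewrite ?(negbTE ji) // eq_sym (negbTE ie).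
rewrite (_ : [set j | _] = ~: K); first by rewrite cardsCs setCK card_ord.
apply/setP => j; rewrite !inE; case: (eqVneq j e) => [->|je] /=; first by rewrite eqxx (negbTE eK).
by case: (j \in K); rewrite /= ?eqxx // (negbTE je).
Qed.

Lemma votes_held_expert_profile K : e \notin K ->
  votes_held (expert_profile K) e = (N - #|K|)%N.
Proof.
move=> eK; have := votes_cast_expert_profile eK e.
by rewrite /votes_cast /expert_weight /is_sincere /expert_profile !eqxx.
Qed.

End Delegation.

Definition agree N (b : bool) (s : {ffun 'I_N -> bool}) : {ffun 'I_N -> bool} :=
  [ffun i => s i == b].

Lemma agree_inj N b : injective (@agree N b).
Proof.
move=> s1 s2 /ffunP s12; apply/ffunP => i; move: {s12}(s12 i); rewrite !ffunE.
by case: b; case: (s1 i); case: (s2 i).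
Qed.

Section SingleExpert.
Variables (R : realType) (N : nat) (e : 'I_N) (q r : R).
Implicit Types (p : nprofile N) (K : {set 'I_N}) (w : 'I_N -> nat) (s x : {ffun 'I_N -> bool}).
Local Notation prec := (precision e q r).
Local Notation success := (wmaj_success prec).
Local Notation win := (@win_prob R).

Lemma margin_agree p s b :
  margin (votes_cast p) (agree b s) = (Defs.tally p s b)%:Z - (Defs.tally p s (~~ b))%:Z.
Proof.
rewrite !tally_votes_cast -!natz !natr_sum -sumrB; apply: eq_bigr => i _; rewrite ffunE !natz.
by case: b; case: (s i); rewrite /signb /=; lia.
Qed.

Lemma correct_probE b nA nB :
  correct_prob R b nA nB = win (if b then nA%:Z - nB%:Z else nB%:Z - nA%:Z).
Proof. by case: b; rewrite /correct_prob /win_prob /= subr_gt0 ltz_nat subr_eq0. Qed.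

Lemma success_probE p : success_prob e q r p = success (votes_cast p).
Proof.
have half b : success (votes_cast p) =
    \sum_s sig_prob e q r b s * correct_prob R b (Defs.tally p s true) (Defs.tally p s false).
  rewrite /wmaj_success (reindex_inj (@agree_inj N b)); apply: eq_bigr => s _ /=.
  rewrite correct_probE margin_agree; congr (_ * win _); last by case: b.
  by apply: eq_bigr => i _; rewrite ffunE /sig_lik; case: (s i == b).
by rewrite /success_prob big_bool /= -!half; field.
Qed.

Hypotheses (N_odd : odd N) (q_gt_half : 2^-1 < q) (q_lt_r : q < r) (r_lt1 : r < 1).

Lemma q_gt0 : 0 < q.
Proof. by apply: lt_trans q_gt_half; rewrite invr_gt0. Qed.

Lemma precision_gt0 i : 0 < prec i.
Proof. by rewrite /precision; case: ifP => _; move: q_gt0 q_lt_r; lra. Qed.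

Lemma precision_lt1 i : prec i < 1.
Proof. by rewrite /precision; case: ifP => _; move: q_lt_r r_lt1; lra. Qed.

Lemma logit_q_gt0 : 0 < logit q.
Proof.
have q_lt1 : q < 1 by move: q_lt_r r_lt1; lra.
by apply: ln_gt0; rewrite ltr_pdivlMr ?subr_gt0 // mul1r; move: q_gt_half; lra.
Qed.

Lemma wstar_gt1 : 1 < wstar q r.
Proof.
rewrite -[wstar q r]/(logit r / logit q) ltr_pdivlMr ?logit_q_gt0 // mul1r /logit.
have q0 := q_gt0; have qr := q_lt_r; have r1 := r_lt1.
rewrite !ln_div ?posrE ?subr_gt0; try lra.
have : ln q < ln r by rewrite ltr_ln ?posrE //; lra.
have : ln (1 - r) < ln (1 - q) by rewrite ltr_ln ?posrE ?subr_gt0 //; lra.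
lra.
Qed.

Definition wfloor : nat := `|Num.floor (wstar q r)|%N.

Lemma wfloorE : wfloor%:Z = Num.floor (wstar q r).
Proof. by rewrite /wfloor gez0_abs // floor_ge0; apply: ltW; apply: lt_trans wstar_gt1. Qed.

Lemma wfloor_gt0 : (0 < wfloor)%N.
Proof. by rewrite -ltz_nat wfloorE floor_gt0 ltW ?wstar_gt1. Qed.

Lemma N_double_half : N = N./2.*2.+1.
Proof. by rewrite -[LHS]odd_double_half N_odd. Qed.

Lemma wstar_add_int_gt0 (n : int) : 0 < wstar q r + n%:~R -> 0 <= wfloor%:Z + n.
Proof.
move=> gt0; suff : -1 < wfloor%:Z + n by lia.
rewrite -(@ltr_int R) mulrN1z intrD wfloorE.
by have := floorD1_gt (wstar q r); rewrite intrD mulr1z; move: gt0; lra.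
Qed.

Lemma wstar_add_int_lt0 (n : int) : wstar q r + n%:~R < 0 -> wfloor%:Z + n < 0.
Proof.
move=> lt0; rewrite -(@ltr_int R) intrD wfloorE.
by have := floor_le (wstar q r); move: lt0; lra.
Qed.

Definition balance K x : int := \sum_(i in K) signb (x i).

Lemma balance_flipT K x : balance K (flip [set: 'I_N] x) = - balance K x.
Proof. by rewrite /balance -sumrN; apply: eq_bigr => i _; rewrite ffunE inE signbN. Qed.

Lemma balance_setU1 j K x : j \notin K -> balance (j |: K) x = signb (x j) + balance K x.
Proof. by move=> jK; rewrite /balance big_setU1. Qed.

Lemma balance_parity K x : exists2 c, (c <= #|K|)%N & balance K x = c%:Z + c%:Z - #|K|%:Z.
Proof.
exists (\sum_(i in K) x i)%N; first by rewrite -sum1_card; apply: leq_sum => i _; case: (x i).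
rewrite -!natz -sum1_card !natr_sum -big_split -sumrB /=.
by apply: eq_bigr => i _; case: (x i).
Qed.

Lemma ln_lik_expert K x : e \notin K ->
  ln (lik prec (e |: K) x) - ln (lik prec (e |: K) (flip (e |: K) x))
  = logit q * ((signb (x e))%:~R * wstar q r + (balance K x)%:~R).
Proof.
move=> eK; rewrite ln_lik_flip ?big_setU1 //=; [|exact: precision_gt0|exact: precision_lt1].
rewrite /precision eqxx (eq_bigr (fun i => (signb (x i))%:~R * logit q)); last first.
  by move=> i iK; rewrite ifN //; apply: contraNneq eK => <-.
rewrite -big_distrl /= -rmorph_sum -/(balance K x) -[wstar q r]/(logit r / logit q).
by field; rewrite lt0r_neq0 ?logit_q_gt0.
Qed.

(* On signal profiles where the expert is right, [w'] sides with the likelihood-ratio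
   test on [e |: K] whenever [w] does.  The test favours the state if
   [0 < wstar + balance K x], which implies [0 <= wfloor + balance K x], and disfavours
   it if [wstar + balance K x < 0], which implies [wfloor + balance K x < 0]. *)
Definition beats K w w' : Prop := forall x, x e ->
  (0 <= wfloor%:Z + balance K x -> win (margin w x) <= win (margin w' x)) /\
  (wfloor%:Z + balance K x < 0 -> win (margin w' x) <= win (margin w x)).

(* Where the expert is wrong, complement all signals: this swaps the two cases of
   [beats]. *)
Lemma success_le_of_beats K w w' : e \notin K ->
  supported w (e |: K) -> supported w' (e |: K) -> beats K w w' -> success w <= success w'.
Proof.
move=> eK wK w'K dom.
apply: (wmaj_success_le_pairing precision_gt0 precision_lt1 wK w'K) => x.
rewrite -ltr_ln ?posrE ?lik_gt0 //; try (exact: precision_gt0 || exact: precision_lt1).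
rewrite -subr_gt0 ln_lik_expert // pmulr_rgt0 ?logit_q_gt0 //.
case xe: (x e); rewrite /signb ?mulr1z ?mulrN1z ?mul1r ?mulN1r => llr_gt0.
  by apply: (dom x xe).1; apply: wstar_add_int_gt0.
have suppT w0 : supported w0 [set: 'I_N] by move=> i; rewrite inE.
have flip_e : flip [set: 'I_N] x e by rewrite ffunE inE xe.
have [_] := dom _ flip_e.
rewrite !margin_flip // !win_probN balance_flipT lerD2l lerN2; apply.
by apply: wstar_add_int_lt0; rewrite mulrNz; move: llr_gt0; lra.
Qed.

Local Notation G := (expert_weight e).

Lemma expert_weight_in t K i : e \notin K -> i \in K -> G t K i = 1%N.
Proof. by move=> eK iK; rewrite /expert_weight iK ifN //; apply: contraNneq eK => <-. Qed.

Lemma supported_expert_weight t K : supported (G t K) (e |: K).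
Proof. by move=> i; rewrite !inE /expert_weight negb_or => /andP [/negbTE-> /negbTE->]. Qed.

Lemma margin_supported w K x : e \notin K -> supported w (e |: K) ->
  margin w x = (w e)%:Z * signb (x e) + \sum_(i in K) (w i)%:Z * signb (x i).
Proof.
move=> eK wK; rewrite /margin (bigID (mem (e |: K))) /= big_setU1 //= [X in _ + X]big1 ?addr0 //.
by move=> i /wK ->; rewrite mul0r.
Qed.

Lemma margin_expert_weight t K x : e \notin K ->
  margin (G t K) x = t%:Z * signb (x e) + balance K x.
Proof.
move=> eK; rewrite (margin_supported _ eK (@supported_expert_weight t K)).
congr (_ + _); first by rewrite /expert_weight eqxx.
by apply: eq_bigr => i iK; rewrite expert_weight_in // mul1r.
Qed.

Definition excess w K : nat := \sum_(i in K) `|(w i)%:Z - 1|.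

(* With [map_weight #|K|] votes the expert's committee has odd size, so it never ties
   and decides as the likelihood-ratio test; [expert_share] clamps this weight to the
   votes available to the rule [w] it replaces. *)
Definition map_weight (k : nat) : nat := if odd (wfloor + k) then wfloor else wfloor.+1.

Definition expert_share w K : nat := minn (map_weight #|K|) (maxn 1 (w e + excess w K)).

Lemma expert_share_gt0 w K : (0 < expert_share w K)%N.
Proof. by have := wfloor_gt0; rewrite /expert_share /map_weight; case: ifP; lia. Qed.

Lemma beats_expert_share w K : e \notin K -> supported w (e |: K) ->
  beats K w (G (expert_share w K) K).
Proof.
move=> eK wK x xe; rewrite margin_expert_weight // (margin_supported _ eK wK) xe !mulr1.
pose s := \sum_(i in K) ((w i)%:Z - 1) * signb (x i).
have -> : \sum_(i in K) (w i)%:Z * signb (x i) = balance K x + s.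
  by rewrite /balance -big_split; apply: eq_bigr => i _ /=; ring.
have s_D : - (excess w K)%:Z <= s <= (excess w K)%:Z.
  rewrite /excess -natz natr_sum -sumrN /s; apply/andP; split; apply: ler_sum => i _;
    by rewrite natz /signb; case: (x i); lia.
have map_weight_near : (wfloor <= map_weight #|K| <= wfloor.+1)%N.
  by rewrite /map_weight; case: ifP => _; lia.
have map_weight_odd : odd (map_weight #|K| + #|K|).
  by rewrite /map_weight; case: ifP => // /negbT; rewrite addSn.
have [c cK ->] := balance_parity K x.
exact: clamped_threshold_beats map_weight_near map_weight_odd s_D.
Qed.

Lemma success_le_expert_share w K : e \notin K -> supported w (e |: K) ->
  success w <= success (G (expert_share w K) K).
Proof.
move=> eK wK.
exact: success_le_of_beats eK wK (@supported_expert_weight _ _) (beats_expert_share eK wK).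
Qed.

Lemma exists_fresh K : e \notin K -> (#|K|.+1 < N)%N -> exists2 j, j != e & j \notin K.
Proof.
move=> eK KN; have : ~~ ([set: 'I_N] \subset e |: K).
  by apply: contraL KN => /subset_leq_card; rewrite cardsT card_ord cardsU1 eK; lia.
by case/subsetPn => j _; rewrite !inE negb_or => /andP [je jK]; exists j.
Qed.

Lemma excess_expert_weight t K : e \notin K -> excess (G t K) K = 0%N.
Proof. by move=> eK; apply: big1 => i iK; rewrite expert_weight_in. Qed.

Lemma success_le_grow t K : e \notin K -> (0 < t)%N -> ((t + #|K|).+2 <= N)%N ->
  exists t' K', [/\ e \notin K', #|K'| = #|K|.+1, (0 < t')%N, (t' + #|K'| <= N)%N &
                   success (G t K) <= success (G t' K')].
Proof.
move=> eK t_gt0 tKN; have [|j je jK] := exists_fresh eK; first by lia.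
have eK' : e \notin j |: K by rewrite !inE negb_or eq_sym je.
have supp : supported (G t K) (e |: (j |: K)).
  by apply: supportedS (@supported_expert_weight t K); rewrite setUS // subsetUr.
have excess1 : excess (G t K) (j |: K) = 1%N.
  rewrite /excess big_setU1 //= -/(excess _ _) excess_expert_weight //.
  by rewrite /expert_weight ifN ?(negbTE jK).
exists (expert_share (G t K) (j |: K)), (j |: K); split; rewrite ?cardsU1 ?jK //.
- exact: expert_share_gt0.
- have := geq_minr (map_weight #|j |: K|) (maxn 1 (G t K e + 1)).
  by rewrite /expert_share excess1 /expert_weight eqxx; lia.
- exact: success_le_expert_share eK' supp.
Qed.

Lemma success_expert_weight_even t K : e \notin K -> ~~ odd (t.+1 + #|K|) ->
  success (G t.+1 K) *+ 2 = success (G t K) + success (G t.+2 K).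
Proof.
move=> eK even; rewrite /wmaj_success -big_split -sumrMnl; apply: eq_bigr => x _ /=.
rewrite -mulrDr -mulrnAr !margin_expert_weight //; congr (_ * _).
have [c _ ->] := balance_parity K x.
have [m tKm] : exists m, (t.+1 + #|K| = m * 2)%N.
  by exists (t.+1 + #|K|)./2; rewrite -[LHS]odd_double_half (negbTE even) muln2.
exact: win_prob_avg_margin (signb_pm1 (x e)) tKm.
Qed.

Lemma success_le_01 K : e \notin K -> success (G 0 K) <= success (G 1 K).
Proof.
move=> eK; have := success_le_expert_share eK (@supported_expert_weight 0 K).
suff -> : expert_share (G 0 K) K = 1%N by [].
rewrite /expert_share excess_expert_weight // /expert_weight eqxx /map_weight.
by have := wfloor_gt0; case: ifP; lia.
Qed.

Lemma success_le_fill K t : e \notin K -> (0 < t)%N -> (t + #|K| <= N)%N ->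
  exists c K', [/\ e \notin K', (0 < c)%N, c + #|K'| = N &
                  success (G t K) <= success (G c K')].
Proof.
move: {2}(N - #|K|)%N (leqnn (N - #|K|)) => n.
elim: n K t => [|n IH] K t KN eK t_gt0 tKN; first by lia.
have grow_then_fill t0 : (0 < t0)%N -> ((t0 + #|K|).+2 <= N)%N ->
    exists c K', [/\ e \notin K', (0 < c)%N, c + #|K'| = N &
                    success (G t0 K) <= success (G c K')].
  move=> t0_gt0 t0KN.
  have [t' [K' [eK' K'K t'_gt0 t'K'N le_t0]]] := success_le_grow eK t0_gt0 t0KN.
  have [|c [K'' [eK'' c_gt0 cK''N le_t']]] := IH K' t' _ eK' t'_gt0 t'K'N; first by lia.
  by exists c, K''; split => //; exact: le_trans le_t0 le_t'.
case: (ltngtP (t + #|K|) N) => [tK_lt|tK_gt|tK_eq]; [|by lia|by exists t, K].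
case: (ltngtP (t + #|K|).+1 N) => [tK_lt'|tK_gt|tK_eq]; [exact: grow_then_fill|by lia|].
(* One vote is left over: [t + #|K|] is even, so [G t K] is the average of its
   neighbours. *)
case: t t_gt0 tKN tK_lt tK_eq => // t _ _ tK_lt tK_eq.
have even : ~~ odd (t.+1 + #|K|) by have := N_odd; rewrite -[X in odd X]tK_eq.
have avg := success_expert_weight_even eK even.
case: t avg tK_lt tK_eq {even} => [|t] avg tK_lt tK_eq.
  exists 2%N, K; split => //.
  by have := success_le_01 eK; move: avg; rewrite mulr2n; lra.
have [//||c [K' [eK' c_gt0 cK'N le_t]]] := grow_then_fill t.+1; first by lia.
have [le_c|le_t3] := lerP (success (G t.+2 K)) (success (G c K')).
  by exists c, K'.
exists t.+3, K; split => //.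
by move: avg le_t le_t3; rewrite mulr2n; lra.
Qed.

Lemma success_le_shift c K j : e \notin K -> j != e -> j \notin K -> c.+1 + #|K| = N ->
  (wfloor < c.+1)%N \/ (N.+1 < c.+1.*2)%N -> success (G c.+1 K) <= success (G c (j |: K)).
Proof.
move=> eK je jK cKN c_big; have eK' : e \notin j |: K by rewrite !inE negb_or eq_sym je.
have supp : supported (G c.+1 K) (e |: (j |: K)).
  by apply: supportedS (@supported_expert_weight _ _); rewrite setUS // subsetUr.
apply: (success_le_of_beats eK' supp (@supported_expert_weight _ _)) => x xe.
rewrite (margin_expert_weight _ _ eK) (margin_expert_weight _ _ eK') balance_setU1 //.
rewrite xe /= !mulr1; have [cK cKk ->] := balance_parity K x.
have cKM : c.+1 + #|K| = N./2.*2.+1 by rewrite cKN -N_double_half.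
have c_bigM : (wfloor < c.+1)%N \/ (N./2.*2.+2 < c.+1.*2)%N by rewrite -N_double_half.
exact: shift_vote_beats cKM c_bigM cKk.
Qed.

Definition expert_cap : nat := minn wfloor (N.+1)./2.

Lemma expert_cap_gt0 : (0 < expert_cap)%N.
Proof. by rewrite leq_min wfloor_gt0 -[N]odd_double_half N_odd. Qed.

Lemma success_le_descend c K : e \notin K -> (0 < c)%N -> c + #|K| = N ->
  exists c' K', [/\ e \notin K', (0 < c')%N, (c' <= expert_cap)%N, c' + #|K'| = N &
                   success (G c K) <= success (G c' K')].
Proof.
have capE : expert_cap = minn wfloor N./2.+1.
  by rewrite /expert_cap [in LHS]N_double_half -doubleS doubleK.
elim: c K => [//|c IH] K eK _ cKN.
case: (leqP c.+1 expert_cap) => [c_le|c_gt]; first by exists c.+1, K.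
have c_big : (wfloor < c.+1)%N \/ (N.+1 < c.+1.*2)%N.
  by move: c_gt; rewrite capE gtn_min -!muln2; lia.
have c_gt0 : (0 < c)%N by have := expert_cap_gt0; lia.
have [|j je jK] := exists_fresh eK; first by lia.
have eK' : e \notin j |: K by rewrite !inE negb_or eq_sym je.
have [|c' [K' [eK'' c'_gt0 c'_le c'K'N le_c']]] := IH (j |: K) eK' c_gt0.
  by rewrite cardsU1 jK; lia.
exists c', K'; split => //; exact: le_trans (success_le_shift eK je jK cKN c_big) le_c'.
Qed.

Lemma success_le_expert_form p : exists K : {set 'I_N},
  [/\ e \notin K, (0 < N - #|K|)%N, (N - #|K| <= expert_cap)%N &
      success_prob e q r p <= success (G (N - #|K|) K)].
Proof.
rewrite success_probE; set w := votes_cast p.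
pose K := [set i | (i != e) && (0 < w i)%N].
have eK : e \notin K by rewrite inE eqxx.
have wK : supported w (e |: K).
  by move=> i; rewrite !inE negb_or negb_and negbK lt0n negbK => /andP [/negbTE-> /eqP].
have le_share : (expert_share w K + #|K| <= N)%N.
  have excessE : (excess w K + #|K| = \sum_(i in K) w i)%N.
    rewrite /excess -sum1_card -big_split; apply: eq_bigr => i.
    by rewrite inE => /andP [_ wi] /=; lia.
  have : (w e + \sum_(i in K) w i <= N)%N.
    apply: leq_trans (sum_votes_cast p); rewrite -big_setU1 //=.
    by rewrite [X in (_ <= X)%N](bigID (mem (e |: K))) leq_addr.
  have : (#|e |: K| <= N)%N by rewrite -[X in (_ <= X)%N]card_ord max_card.
  rewrite cardsU1 eK /expert_share; lia.
have [c [K' [eK' c_gt0 cK'N le_c]]] :=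
  success_le_fill eK (expert_share_gt0 w K) le_share.
have [c' [K'' [eK'' c'_gt0 c'_le c'K''N le_c']]] := success_le_descend eK' c_gt0 cK'N.
exists K''; have -> : (N - #|K''|)%N = c' by lia.
split => //.
exact: le_trans (success_le_expert_share eK wK) (le_trans le_c le_c').
Qed.

End SingleExpert.

Theorem lemma5 (R : realType) (N : nat) (e : 'I_N) (q r : R) :
  odd N ->
  2^-1 < q -> q < r -> r < 1 ->
  exists p : nprofile N,
    [/\ valid_profile p,
        (forall p' : nprofile N, valid_profile p' ->
           success_prob e q r p' <= success_prob e q r p),
        p e = Sincere,
        (1 <= votes_held p e)%N &
        ((votes_held p e)%:Z <= Num.floor (wstar q r))%R
          /\ (votes_held p e <= (N.+1)./2)%N].
Proof.
move=> N_odd q_gt_half q_lt_r r_lt1.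
pose admissible (K : {set 'I_N}) :=
  [&& e \notin K, 0 < N - #|K| & N - #|K| <= expert_cap N q r]%N.
pose value (K : {set 'I_N}) := wmaj_success (precision e q r) (expert_weight e (N - #|K|) K).
have admissible_e : admissible [set~ e].
  rewrite /admissible !inE eqxx cardsC1 card_ord /=.
  have := expert_cap_gt0 N_odd q_gt_half q_lt_r r_lt1.
  by have := leq_ltn_trans (leq0n e) (ltn_ord e); lia.
have [K /and3P [eK K_lt K_cap] K_max] := arg_maxP value admissible_e.
exists (expert_profile e K); rewrite votes_held_expert_profile //; split => //.
- exact: expert_profile_valid.
- move=> p' _; rewrite [X in _ <= X]success_probE.
  rewrite (eq_wmaj_success _ (votes_cast_expert_profile eK)).
  have [K' [eK' K'_lt K'_cap le_K']] :=
    success_le_expert_form e N_odd q_gt_half q_lt_r r_lt1 p'.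
  by apply: le_trans le_K' (K_max K' _); rewrite /admissible eK' K'_lt K'_cap.
- by rewrite /expert_profile eqxx.
- rewrite -(wfloorE q_gt_half q_lt_r r_lt1) lez_nat.
  by split; apply: leq_trans K_cap _; [exact: geq_minl | exact: geq_minr].
Qed.
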